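(* Let $(A,\to,1)$ be any algebra of type $(2,0)$. Then the following implications hold: (0) (Re) implies (S); (00) (M) implies (N); (1) (L) and (An) imply (N); (2) (K) and (An) imply (N); (3) (C) and (An) imply (Ex); (3') (Ex) and (Re) imply (C); (4) (Re) and (Ex) imply (D); (5) (Re), (Ex) and (An) imply (M); (5') (Re), (Ex) and (An) imply (N); (6) (Re) and (K) imply (L); (7) (N) and (K) imply (L); (7') (M) and (K) imply (L); (8) (Re), (L) and (Ex) imply (K); (9) (M), (L) and (B) imply (K); (9') (M), (L) and ( ** ) imply (K); (10) if (Ex) holds, then (B) holds if and only if (BB) holds; (10') (Ex) and (B) imply (BB); (10'') (Ex) and (BB) imply (B); (11) (Re), (Ex) and ( * ) imply (BB); (12) (N) and (B) imply ( * ); (12') (M) and (B) imply ( * ); (13) (N) and ( * ) imply (Tr); (13') (M) and ( * ) imply (Tr); (14) (N) and (B) imply (Tr); (14') (M) and (B) imply (Tr); (15) (N) and (BB) imply ( ** ); (15') (M) and (BB) imply ( ** ); (16) (N) and ( ** ) imply (Tr); (16') (M) and ( ** ) imply (Tr); (17) (N) and (BB) imply (Tr); (17') (M) and (BB) imply (Tr); (18) (M) and (BB) imply (Re); (18') (M) and (BB) imply (D); (19) (M) and (B) imply (Re); (20) (BB), (D) and (N) imply (C); (20') (M) and (BB) imply (C); (21) (BB), (D), (N) and (An) imply (Ex); (21') (BB), (D), (L) and (An) imply (Ex); (21'') (M), (BB) and (An) imply (Ex); (22) (B), (C), (K) and (An) imply (Re); (23) (BB), (D), (Re) and (An) imply (N);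 (24) (Re), (Ex) and (Tr) imply ( ** ).
   Context: An algebra $(A,\to,1)$ of type $(2,0)$ is a set $A$ with a binary operation $\to$ and a constant $1\in A$. The following properties are considered, each required for all $x,y,z\in A$: (An) $x\to y=1$ and $y\to x=1$ imply $x=y$; (B) $(y\to z)\to((x\to y)\to(x\to z))=1$; (BB) $(y\to z)\to((z\to x)\to(y\to x))=1$; ( * ) $y\to z=1$ implies $(x\to y)\to(x\to z)=1$; ( ** ) $y\to z=1$ implies $(z\to x)\to(y\to x)=1$; (C) $(x\to(y\to z))\to(y\to(x\to z))=1$; (D) $y\to((y\to x)\to x)=1$; (Ex) $x\to(y\to z)=y\to(x\to z)$; (K) $x\to(y\to x)=1$; (L) $x\to 1=1$; (M) $1\to x=x$; (N) $1\to x=1$ implies $x=1$; (Re) $x\to x=1$; (S) $x=y$ implies $x\to y=1$; (Tr) $x\to y=1$ and $y\to z=1$ imply $x\to z=1$. *)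

Set Implicit Arguments.

Section Props.
Set Implicit Arguments.
Variables (A : Type) (imp : A -> A -> A) (one : A).
Local Infix "-->" := imp (at level 55, right associativity).

Definition P_An : Prop := forall x y, x --> y = one -> y --> x = one -> x = y.
Definition P_B : Prop := forall x y z, (y --> z) --> ((x --> y) --> (x --> z)) = one.
Definition P_BB : Prop := forall x y z, (y --> z) --> ((z --> x) --> (y --> x)) = one.
Definition P_star : Prop := forall x y z, y --> z = one -> (x --> y) --> (x --> z) = one.
Definition P_starstar : Prop := forall x y z, y --> z = one -> (z --> x) --> (y --> x) = one.
Definition P_C : Prop := forall x y z, (x --> (y --> z)) --> (y --> (x --> z)) = one.
Definition P_D : Prop := forall x y, y --> ((y --> x) --> x) = one.
Definition P_Ex : Prop := forall x y z, x --> (y --> z) = y --> (x --> z).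
Definition P_K : Prop := forall x y, x --> (y --> x) = one.
Definition P_L : Prop := forall x, x --> one = one.
Definition P_M : Prop := forall x, one --> x = x.
Definition P_N : Prop := forall x, one --> x = one -> x = one.
Definition P_Re : Prop := forall x, x --> x = one.
Definition P_S : Prop := forall x y, x = y -> x --> y = one.
Definition P_Tr : Prop := forall x y z, x --> y = one -> y --> z = one -> x --> z = one.
End Props.


(* Every implication is a one- or two-step calculation: instantiate an axiom
   at well-chosen arguments, simplify with (M), (Re) or (Ex), and conclude by
   (An), (N) or (Tr).  The variants with (M) follow from those with (N),
   since (M) implies (N). *)

Section Implications.

Variables (A : Type) (imp : A -> A -> A) (one : A).
Local Infix "-->" := imp (at level 55, right associativity).

Lemma S_of_Re : P_Re imp one -> P_S imp one.
Proof. intros hRe x y ->; apply hRe. Qed.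

Lemma N_of_M : P_M imp one -> P_N imp one.
Proof. intros hM x h; rewrite hM in h; exact h. Qed.

Lemma N_of_L_An : P_L imp one -> P_An imp one -> P_N imp one.
Proof. intros hL hAn x h; apply hAn; [apply hL | exact h]. Qed.

Lemma N_of_K_An : P_K imp one -> P_An imp one -> P_N imp one.
Proof.
intros hK hAn x h.
assert (hx1 := hK x one); rewrite h in hx1.
apply hAn; assumption.
Qed.

Lemma Ex_of_C_An : P_C imp one -> P_An imp one -> P_Ex imp.
Proof. intros hC hAn x y z; apply hAn; apply hC. Qed.

Lemma C_of_Ex_Re : P_Ex imp -> P_Re imp one -> P_C imp one.
Proof. intros hEx hRe x y z; rewrite (hEx y x z); apply hRe. Qed.

Lemma D_of_Re_Ex : P_Re imp one -> P_Ex imp -> P_D imp one.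
Proof. intros hRe hEx x y; rewrite hEx; apply hRe. Qed.

Lemma imp_one_imp_of_Re_Ex (hRe : P_Re imp one) (hEx : P_Ex imp) (x : A) :
  x --> (one --> x) = one.
Proof. rewrite hEx, hRe; apply hRe. Qed.

Lemma N_of_Re_Ex_An : P_Re imp one -> P_Ex imp -> P_An imp one -> P_N imp one.
Proof.
intros hRe hEx hAn x h.
assert (hx1 := imp_one_imp_of_Re_Ex hRe hEx x); rewrite h in hx1.
apply hAn; assumption.
Qed.

Lemma M_of_Re_Ex_An : P_Re imp one -> P_Ex imp -> P_An imp one -> P_M imp one.
Proof.
intros hRe hEx hAn x; apply hAn.
- apply (N_of_Re_Ex_An hRe hEx hAn), (D_of_Re_Ex hRe hEx).
- apply imp_one_imp_of_Re_Ex; assumption.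
Qed.

Lemma L_of_Re_K : P_Re imp one -> P_K imp one -> P_L imp one.
Proof. intros hRe hK x; generalize (hK x x); rewrite hRe; trivial. Qed.

Lemma L_of_N_K : P_N imp one -> P_K imp one -> P_L imp one.
Proof. intros hN hK x; apply hN, hK. Qed.

Lemma K_of_Re_L_Ex : P_Re imp one -> P_L imp one -> P_Ex imp -> P_K imp one.
Proof. intros hRe hL hEx x y; rewrite hEx, hRe; apply hL. Qed.

Lemma K_of_M_L_B : P_M imp one -> P_L imp one -> P_B imp one -> P_K imp one.
Proof. intros hM hL hB x y; generalize (hB y one x); rewrite hM, hL, hM; trivial. Qed.

Lemma K_of_M_L_starstar :
  P_M imp one -> P_L imp one -> P_starstar imp one -> P_K imp one.
Proof. intros hM hL hS x y; generalize (hS x y one (hL y)); rewrite hM; trivial. Qed.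

Lemma BB_of_Ex_B : P_Ex imp -> P_B imp one -> P_BB imp one.
Proof. intros hEx hB x y z; rewrite hEx; apply hB. Qed.

Lemma B_of_Ex_BB : P_Ex imp -> P_BB imp one -> P_B imp one.
Proof. intros hEx hBB x y z; rewrite hEx; apply hBB. Qed.

(* After exchanging, (BB) at (x, y, z) is [P_star] applied to the (D)-instance
   z --> ((z --> x) --> x) = one. *)
Lemma BB_of_Re_Ex_star : P_Re imp one -> P_Ex imp -> P_star imp one -> P_BB imp one.
Proof.
intros hRe hEx hS x y z.
rewrite (hEx (z --> x) y x); apply hS, (D_of_Re_Ex hRe hEx).
Qed.

Lemma star_of_N_B : P_N imp one -> P_B imp one -> P_star imp one.
Proof. intros hN hB x y z h; apply hN; generalize (hB x y z); rewrite h; trivial. Qed.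

Lemma Tr_of_N_star : P_N imp one -> P_star imp one -> P_Tr imp one.
Proof. intros hN hS x y z hxy hyz; apply hN; generalize (hS x y z hyz); rewrite hxy; trivial. Qed.

Lemma starstar_of_N_BB : P_N imp one -> P_BB imp one -> P_starstar imp one.
Proof. intros hN hBB x y z h; apply hN; generalize (hBB x y z); rewrite h; trivial. Qed.

Lemma Tr_of_N_starstar : P_N imp one -> P_starstar imp one -> P_Tr imp one.
Proof. intros hN hS x y z hxy hyz; apply hN; generalize (hS z x y hxy); rewrite hyz; trivial. Qed.

Lemma Re_of_M_BB : P_M imp one -> P_BB imp one -> P_Re imp one.
Proof. intros hM hBB x; generalize (hBB x one one); rewrite !hM; trivial. Qed.

Lemma D_of_M_BB : P_M imp one -> P_BB imp one -> P_D imp one.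
Proof. intros hM hBB x y; generalize (hBB x one y); rewrite !hM; trivial. Qed.

Lemma Re_of_M_B : P_M imp one -> P_B imp one -> P_Re imp one.
Proof. intros hM hB x; generalize (hB one one x); rewrite !hM; trivial. Qed.

(* x --> (y --> z) is below ((y --> z) --> z) --> (x --> z) by (BB), which is
   below y --> (x --> z) by [P_starstar] applied to (D); conclude by (Tr). *)
Lemma C_of_BB_D_N : P_BB imp one -> P_D imp one -> P_N imp one -> P_C imp one.
Proof.
intros hBB hD hN x y z.
assert (hS := starstar_of_N_BB hN hBB).
apply (Tr_of_N_starstar hN hS) with (((y --> z) --> z) --> (x --> z)).
- apply hBB.
- apply hS, hD.
Qed.

(* By (C) and (K), y --> (x --> x) = one for every y; take y = one. *)
Lemma Re_of_C_K_N : P_C imp one -> P_K imp one -> P_N imp one -> P_Re imp one.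
Proof.
intros hC hK hN x.
assert (hyxx : forall y, y --> (x --> x) = one).
{ intros y; apply hN; generalize (hC x y x); rewrite hK; trivial. }
apply hN, hyxx.
Qed.

Lemma N_of_D_Re_An : P_D imp one -> P_Re imp one -> P_An imp one -> P_N imp one.
Proof.
intros hD hRe hAn x h.
assert (hx1 := hD x x); rewrite hRe, h in hx1.
apply hAn; assumption.
Qed.

Lemma starstar_of_Re_Ex_Tr :
  P_Re imp one -> P_Ex imp -> P_Tr imp one -> P_starstar imp one.
Proof.
intros hRe hEx hTr x y z h; rewrite hEx.
apply hTr with z; [exact h | apply (D_of_Re_Ex hRe hEx)].
Qed.

End Implications.

Create HintDb type20_implications.
#[export] Hint Resolve S_of_Re N_of_M N_of_L_An N_of_K_An Ex_of_C_An C_of_Ex_Re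
  D_of_Re_Ex N_of_Re_Ex_An M_of_Re_Ex_An L_of_Re_K L_of_N_K K_of_Re_L_Ex
  K_of_M_L_B K_of_M_L_starstar BB_of_Ex_B B_of_Ex_BB
  BB_of_Re_Ex_star star_of_N_B Tr_of_N_star starstar_of_N_BB Tr_of_N_starstar
  Re_of_M_BB D_of_M_BB Re_of_M_B C_of_BB_D_N Re_of_C_K_N N_of_D_Re_An
  starstar_of_Re_Ex_Tr : type20_implications.

Theorem proposition2p1 (A : Type) (imp : A -> A -> A) (one : A) :
  let An := P_An imp one in let B := P_B imp one in let BB := P_BB imp one in
  let Star := P_star imp one in let StarStar := P_starstar imp one in
  let C := P_C imp one in let D := P_D imp one in let Ex := P_Ex imp in
  let K := P_K imp one in let L := P_L imp one in let M := P_M imp one in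
  let N := P_N imp one in let Re := P_Re imp one in let S := P_S imp one in
  let Tr := P_Tr imp one in
  (* (0) *)   (Re -> S) /\
  (* (00) *)  (M -> N) /\
  (* (1) *)   (L -> An -> N) /\
  (* (2) *)   (K -> An -> N) /\
  (* (3) *)   (C -> An -> Ex) /\
  (* (3') *)  (Ex -> Re -> C) /\
  (* (4) *)   (Re -> Ex -> D) /\
  (* (5) *)   (Re -> Ex -> An -> M) /\
  (* (5') *)  (Re -> Ex -> An -> N) /\
  (* (6) *)   (Re -> K -> L) /\
  (* (7) *)   (N -> K -> L) /\
  (* (7') *)  (M -> K -> L) /\
  (* (8) *)   (Re -> L -> Ex -> K) /\
  (* (9) *)   (M -> L -> B -> K) /\
  (* (9') *)  (M -> L -> StarStar -> K) /\
  (* (10) *)  (Ex -> (B <-> BB)) /\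
  (* (10') *) (Ex -> B -> BB) /\
  (* (10'') *)(Ex -> BB -> B) /\
  (* (11) *)  (Re -> Ex -> Star -> BB) /\
  (* (12) *)  (N -> B -> Star) /\
  (* (12') *) (M -> B -> Star) /\
  (* (13) *)  (N -> Star -> Tr) /\
  (* (13') *) (M -> Star -> Tr) /\
  (* (14) *)  (N -> B -> Tr) /\
  (* (14') *) (M -> B -> Tr) /\
  (* (15) *)  (N -> BB -> StarStar) /\
  (* (15') *) (M -> BB -> StarStar) /\
  (* (16) *)  (N -> StarStar -> Tr) /\
  (* (16') *) (M -> StarStar -> Tr) /\
  (* (17) *)  (N -> BB -> Tr) /\
  (* (17') *) (M -> BB -> Tr) /\
  (* (18) *)  (M -> BB -> Re) /\
  (* (18') *) (M -> BB -> D) /\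
  (* (19) *)  (M -> B -> Re) /\
  (* (20) *)  (BB -> D -> N -> C) /\
  (* (20') *) (M -> BB -> C) /\
  (* (21) *)  (BB -> D -> N -> An -> Ex) /\
  (* (21') *) (BB -> D -> L -> An -> Ex) /\
  (* (21'') *)(M -> BB -> An -> Ex) /\
  (* (22) *)  (B -> C -> K -> An -> Re) /\
  (* (23) *)  (BB -> D -> Re -> An -> N) /\
  (* (24) *)  (Re -> Ex -> Tr -> StarStar).
Proof.
cbv zeta.
repeat split; intros; eauto 6 with type20_implications.
Qed.
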